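(* Let $p,q\in\mathbb{C}$ with $pq\neq 1$. The following two conditions are equivalent: (i) $\mathcal{S}_{p,q}$ maps every positive triangle triple to a positive triangle triple; (ii) either $p=q\neq \tfrac12$, or $p\neq q$ and $\frac{(p-1)(2q-1)}{p-q}\in\mathbb{R}\cup\mathcal{H}^+$, where $\mathcal{H}^+=\{z\in\mathbb{C}:\operatorname{Im}z>0\}$.
   Context: A triangle triple is an ordered triple $(a,b,c)\in\mathbb{C}^3$ with pairwise distinct entries; it is degenerate if $a,b,c$ are collinear, and positive if it is non-degenerate and $\operatorname{Im}\frac{a-b}{c-b}>0$. For $p,q\in\mathbb{C}$ with $pq\neq1$ put $\alpha_{p,q}=\frac{p(1-q)}{1-pq}$, $\beta_{p,q}=\frac{q(1-p)}{1-pq}$, $\gamma_{p,q}=\frac{(1-p)(1-q)}{1-pq}$, and define the linear map $\mathcal{S}_{p,q}:\mathbb{C}^3\to\mathbb{C}^3$ by $\mathcal{S}_{p,q}(a,b,c)=(\alpha_{p,q}a+\beta_{p,q}b+\gamma_{p,q}c,\ \alpha_{p,q}b+\beta_{p,q}c+\gamma_{p,q}a,\ \alpha_{p,q}c+\beta_{p,q}a+\gamma_{p,q}b)$. *)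

(* complex numbers as an arbitrary numClosedFieldType
   (C = R[i] with R real closed; e.g. algC). *)
From HB Require Import structures.
From mathcomp Require Import all_boot all_order all_algebra.
Set Implicit Arguments. Unset Strict Implicit. Unset Printing Implicit Defensive.
Import Order.TTheory GRing.Theory Num.Theory.
Local Open Scope ring_scope.

Section TriangleDefs.
Variable C : numClosedFieldType.

Definition triangle_triple (a b c : C) : Prop := a <> b /\ b <> c /\ a <> c.

(* a, b, c collinear: the (real) determinant Im((b - a) * conj(c - a)) vanishes *)
Definition collinear (a b c : C) : Prop := 'Im ((b - a) * (c - a)^*) = 0.

Definition degenerate (a b c : C) : Prop := triangle_triple a b c /\ collinear a b c.

Definition positive_triple (a b c : C) : Prop :=
  triangle_triple a b c /\ ~ collinear a b c /\ 0 < 'Im ((a - b) / (c - b)).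

Definition alphaS (p q : C) : C := p * (1 - q) / (1 - p * q).
Definition betaS (p q : C) : C := q * (1 - p) / (1 - p * q).
Definition gammaS (p q : C) : C := (1 - p) * (1 - q) / (1 - p * q).

Definition S_map (p q : C) (t : C * C * C) : C * C * C :=
  let: (a, b, c) := t in
  (alphaS p q * a + betaS p q * b + gammaS p q * c,
   alphaS p q * b + betaS p q * c + gammaS p q * a,
   alphaS p q * c + betaS p q * a + gammaS p q * b).

Definition Hplus (z : C) : Prop := 0 < 'Im z.

End TriangleDefs.

(* Write u = a - b and v = c - b, so that (a, b, c) is positive iff
   Im (u * conj v) > 0.  A circulant map with weights al, be, ga sends (u, v)
   to (P u + Q v, -Q u + (P + Q) v) with P = al - ga and Q = ga - be, and
   twice the new orientation is
     (|P|^2 + |Q|^2 + |P + Q|^2) Im (u conj v) + Im (Q conj P) (|u|^2 + |v|^2 + |u - v|^2).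
   The first weight is never negative, and the area of (0, u, v) can be made
   arbitrarily small compared with its squared side lengths, so positivity is
   preserved iff (P, Q) <> 0 and Im (Q conj P) >= 0.  For S_{p,q} one finds
   P + Q = (p - q) / (1 - p q) and Q / (P + Q) = (p - 1)(2 q - 1) / (p - q),
   whose imaginary part has the sign of Im (Q conj P). *)

From HB Require Import structures.
From mathcomp Require Import all_boot all_order all_algebra.
From mathcomp Require Import ring.
Import Order.TTheory GRing.Theory Num.Theory.
Local Open Scope ring_scope.

Section CirculantOrientation.
Variable C : numClosedFieldType.
Implicit Types t u v P Q a b c al be ga : C.

Local Ltac conj_expand :=
  rewrite ?ImE ?normCK ?(rmorphM, rmorphD, rmorphB, rmorphN) /= ?conjCK ?conjCi.

Definition sqsides u v : C := `|u| ^+ 2 + `|v| ^+ 2 + `|u - v| ^+ 2.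

Lemma sqsides_ge0 u v : 0 <= sqsides u v.
Proof. by rewrite !addr_ge0 ?exprn_ge0. Qed.

Lemma sqsides_gt0 u v : (u != 0) || (v != 0) -> 0 < sqsides u v.
Proof.
rewrite /sqsides -addrA addrC => /orP[u0 | v0].
  by rewrite ltr_wpDl ?addr_ge0 ?exprn_ge0 // exprn_gt0 ?normr_gt0.
by rewrite -addrA ltr_wpDr ?addr_ge0 ?exprn_ge0 // exprn_gt0 ?normr_gt0.
Qed.

Lemma Im_twist P Q u v :
  2 * 'Im ((P * u + Q * v) * (- (Q * u) + (P + Q) * v)^*) =
  sqsides P (- Q) * 'Im (u * v^*) + 'Im (Q * P^*) * sqsides u v.
Proof. by rewrite /sqsides; conj_expand; field. Qed.

Lemma Im_iM_conj1 t : t \is Num.real -> 'Im ('i * t * 1^*) = t.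
Proof. by move=> t_real; rewrite rmorph1 mulr1 ImMil; apply/Creal_ReP. Qed.

Lemma sqsides_iM1 t : t \is Num.real -> sqsides ('i * t) 1 = 2 + 2 * t ^+ 2.
Proof.
move=> t_real; rewrite /sqsides normrM normCi mul1r real_normK // normr1 expr1n.
rewrite -[_ - 1]addrC normC2_rect ?rpredN1 //.
by rewrite sqrrN expr1n; ring.
Qed.

Lemma twist_orientation P Q :
  (forall u v, 0 < 'Im (u * v^*) ->
     0 < 'Im ((P * u + Q * v) * (- (Q * u) + (P + Q) * v)^*)) <->
  ((P != 0) || (Q != 0)) /\ 0 <= 'Im (Q * P^*).
Proof.
set K := sqsides P (- Q); set M := 'Im (Q * P^*).
have twice_pos (x : C) : (0 < 2 * x) = (0 < x) :> bool by rewrite pmulr_rgt0.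
split=> [preserved | [PQ0 M_ge0] u v uv_pos]; last first.
  rewrite -twice_pos Im_twist ltr_wpDr ?mulr_ge0 ?sqsides_ge0 // mulr_gt0 //.
  by apply: sqsides_gt0; rewrite oppr_eq0.
have probe t : t \is Num.real -> 0 < t -> 0 < K * t + M * (2 + 2 * t ^+ 2).
  move=> t_real t_pos; have := preserved _ _ (_ : 0 < 'Im ('i * t * 1^*)).
  rewrite Im_iM_conj1 // => /(_ t_pos); rewrite -twice_pos Im_twist.
  by rewrite Im_iM_conj1 ?sqsides_iM1.
have PQ0 : (P != 0) || (Q != 0).
  apply: contraTT (probe 1 (rpred1 _) ltr01).
  rewrite negb_or !negbK /K /M => /andP[/eqP-> /eqP->].
  rewrite oppr0 /sqsides subr0 normr0 expr0n !add0r !mul0r.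
  by rewrite (Creal_ImP _ (rpred0 _)) mul0r addr0 ltxx.
split=> //; rewrite real_leNgt ?Creal_Im //; apply/negP => M_neg.
have K_pos : 0 < K by apply: sqsides_gt0; rewrite oppr_eq0.
have t_pos : 0 < - M / K by rewrite divr_gt0 // oppr_gt0.
have := probe _ (gtr0_real t_pos) t_pos.
have -> : K * (- M / K) = - M by rewrite mulrC divfK ?gt_eqF.
set t := - M / K; have -> : - M + M * (2 + 2 * t ^+ 2) = M * (1 + 2 * t ^+ 2) by ring.
have : 0 < 1 + 2 * t ^+ 2 by rewrite addr_gt0 // mulr_gt0 // exprn_gt0.
by rewrite nmulr_rgt0 // => /lt_trans h /h; rewrite ltxx.
Qed.

Lemma Im_divE u v : 'Im (u / v) = `|v| ^- 2 * 'Im (u * v^*).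
Proof.
have real_w : `|v| ^- 2 \is Num.real by rewrite rpredV rpredX ?normr_real.
by rewrite invC_norm mulrCA (ImMl real_w).
Qed.

Lemma Im_div_gt0 u v : (0 < 'Im (u / v)) = (0 < 'Im (u * v^*)).
Proof.
have [-> | v0] := eqVneq v 0; first by rewrite conjC0 invr0 !mulr0.
by rewrite Im_divE pmulr_rgt0 // invr_gt0 exprn_gt0 // normr_gt0.
Qed.

Lemma positive_tripleE a b c : positive_triple a b c <-> 0 < 'Im ((a - b) * (c - b)^*).
Proof.
have flat x y : 'Im ((x - y) * (x - y)^*) = 0.
  by rewrite -normCK; apply/Creal_ImP; rewrite rpredX ?normr_real.
have collinearE : 'Im ((b - a) * (c - a)^*) = - 'Im ((a - b) * (c - b)^*).
  by conj_expand; field.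
rewrite /positive_triple /triangle_triple /collinear Im_div_gt0 collinearE.
split=> [[_ [_ //]] | pos].
have Im0 : 'Im (0 : C) = 0 by apply/Creal_ImP.
split; last split=> //; last by move=> /eqP; rewrite oppr_eq0 gt_eqF.
split; [move=> ab | split=> [bc | ac]]; move: pos;
  [rewrite ab subrr mul0r | rewrite bc subrr conjC0 mulr0 | rewrite ac flat];
  by rewrite ?Im0 ltxx.
Qed.

Definition circulant3 al be ga (t : C * C * C) : C * C * C :=
  let: (a, b, c) := t in
  (al * a + be * b + ga * c, al * b + be * c + ga * a, al * c + be * a + ga * b).

Definition preserves_positive (f : C * C * C -> C * C * C) : Prop :=
  forall a b c, positive_triple a b c ->
    let: (a', b', c') := f (a, b, c) in positive_triple a' b' c'.

Lemma circulant3_preserves_positive al be ga :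
  preserves_positive (circulant3 al be ga) <->
  ((al - ga != 0) || (ga - be != 0)) /\ 0 <= 'Im ((ga - be) * (al - ga)^*).
Proof.
rewrite -twist_orientation /preserves_positive.
set P := al - ga; set Q := ga - be.
have side_ab a b c :
  al * a + be * b + ga * c - (al * b + be * c + ga * a) = P * (a - b) + Q * (c - b).
  by rewrite /P /Q; ring.
have side_cb a b c :
  al * c + be * a + ga * b - (al * b + be * c + ga * a) = - (Q * (a - b)) + (P + Q) * (c - b).
  by rewrite /P /Q; ring.
split=> [preserved u v | preserved a b c].
  by move: (preserved u 0 v); rewrite /= !positive_tripleE side_ab side_cb !subr0.
by rewrite /= !positive_tripleE side_ab side_cb; apply: preserved.
Qed.

Lemma Im_ge0_real_or_Hplus u : 0 <= 'Im u <-> u \is Num.real \/ Hplus u.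
Proof.
rewrite le0r /Hplus; split=> [/orP[/eqP/Creal_ImP | ] | [/Creal_ImP-> | ->]];
  by [left | right | rewrite eqxx | rewrite orbT].
Qed.

Lemma Im_weight_ratio al be ga :
  'Im ((ga - be) / (al - be)) = `|al - be| ^- 2 * 'Im ((ga - be) * (al - ga)^*).
Proof. by rewrite Im_divE; congr (_ * _); conj_expand; field. Qed.

Lemma circulant3_preserves_positive_eq al ga :
  preserves_positive (circulant3 al al ga) <-> al != ga.
Proof.
have flat : 'Im ((ga - al) * (al - ga)^*) = 0.
  by apply/Creal_ImP; rewrite -opprB mulNr -normCK rpredN rpredX ?normr_real.
rewrite circulant3_preserves_positive flat lexx -opprB oppr_eq0 orbb subr_eq0.
by rewrite eq_sym; split=> [[] | ->].
Qed.

Lemma circulant3_preserves_positive_neq al be ga : al != be ->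
  preserves_positive (circulant3 al be ga) <-> 0 <= 'Im ((ga - be) / (al - be)).
Proof.
move=> al_neq_be; rewrite circulant3_preserves_positive Im_weight_ratio.
have nz : (al - ga != 0) || (ga - be != 0).
  by apply: contra_neqT al_neq_be; rewrite negb_or !negbK !subr_eq0 => /andP[/eqP-> /eqP->].
rewrite nz pmulr_rge0 ?invr_gt0 ?exprn_gt0 ?normr_gt0 ?subr_eq0 //.
by split=> [[] | ->].
Qed.

Section SWeights.
Variables p q : C.
Hypothesis pq_neq1 : p * q != 1.
Let den_nz : 1 - p * q != 0. Proof. by rewrite subr_eq0 eq_sym. Qed.

Lemma alphaS_sub_gammaS : alphaS p q - gammaS p q = (1 - q) * (2 * p - 1) / (1 - p * q).
Proof. by rewrite /alphaS /gammaS; field. Qed.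

Lemma alphaS_sub_betaS : alphaS p q - betaS p q = (p - q) / (1 - p * q).
Proof. by rewrite /alphaS /betaS; field. Qed.

Lemma S_weight_ratio : p != q ->
  (gammaS p q - betaS p q) / (alphaS p q - betaS p q) = (p - 1) * (2 * q - 1) / (p - q).
Proof.
by move=> p_neq_q; rewrite alphaS_sub_betaS /gammaS /betaS; field; rewrite subr_eq0 p_neq_q.
Qed.

End SWeights.

Lemma alphaS_eq_gammaS_diag (p : C) :
  p * p != 1 -> (alphaS p p == gammaS p p) = (p == 2^-1).
Proof.
move=> pp_neq1; have two_nz : (2 : C) != 0 by rewrite pnatr_eq0.
have p_neq1 : 1 - p != 0.
  by apply: contra_neq pp_neq1 => /eqP; rewrite subr_eq0 => /eqP <-; rewrite mulr1.
have den_nz : 1 - p * p != 0 by rewrite subr_eq0 eq_sym.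
rewrite -subr_eq0 alphaS_sub_gammaS // !mulf_eq0 invr_eq0 (negPf p_neq1) (negPf den_nz).
by rewrite orbF subr_eq0 -[p == _](inj_eq (mulfI two_nz)) divff.
Qed.

End CirculantOrientation.

Theorem proposition2p1 (C : numClosedFieldType) (p q : C) (hpq : p * q != 1) :
  (forall a b c : C, positive_triple a b c ->
     let: (a', b', c') := S_map p q (a, b, c) in positive_triple a' b' c')
  <->
  ((p = q /\ p <> 2^-1) \/
   (p <> q /\ (let z := (p - 1) * (2 * q - 1) / (p - q) in
               z \is Num.real \/ Hplus z))).
Proof.
case: (eqVneq p q) hpq => [<- hpp | p_neq_q hpq].
  etransitivity; first exact: circulant3_preserves_positive_eq.
  rewrite alphaS_eq_gammaS_diag //.
  by split=> [/eqP | [[_ /eqP] | []]]; auto.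
have al_neq_be : alphaS p q != betaS p q.
  by rewrite -subr_eq0 alphaS_sub_betaS // mulf_neq0 ?invr_eq0 ?subr_eq0 // eq_sym.
etransitivity; first exact: circulant3_preserves_positive_neq al_neq_be.
rewrite S_weight_ratio // Im_ge0_real_or_Hplus.
by split=> [z_ok | [[p_eq_q _] | [_ z_ok]]];
  [right; split=> //; apply/eqP | move/eqP: p_neq_q | ].
Qed.
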